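(* Let $K\ge 1$ and let $Y,\hat Y\in[K]=\{1,\dots,K\}$, $A\in\{0,1\}$, $D\in\{0,1\}$ be jointly distributed random variables such that $\mathbb{P}(\hat Y=Y\mid D=1)=1$, and let $p_D:=\mathbb{P}(D=1)$. Assume $p^+\in(0,1)$, and that all conditional probabilities below are well-defined (all conditioning events have positive probability; in particular $p_y^+>0$ and $p_y-p_y^+>0$). Then for all $y,\hat y\in[K]$: \[ \Delta\mathrm{s.p.}(\hat y)=\frac{p_D}{p^+(1-p^+)}\Bigl(\varphi^+_{\hat y}(p^+-q^+)-(q_{\hat y}p^+-q^+_{\hat y})\Bigr)+\Delta\mathrm{s.p.}(\hat y\mid D=0)\Bigl(1-p_D\frac{1-q^+}{1-p^+}\Bigr), \] \[ \Delta\mathrm{eq.opp.}(y)=\frac{p_D}{p_y^+(p_y-p_y^+)}\bigl(C^+_{y,y}-1\bigr)(q_yp_y^+-p_yq_y^+)+\Delta\mathrm{eq.opp.}(y\mid D=0)\Bigl(1-p_D\frac{q_y-q_y^+}{p_y-p_y^+}\Bigr), \] \[ \Delta\mathrm{eq.odds}(y,\hat y)=\frac{p_D}{p_y^+(p_y-p_y^+)}\bigl(C^+_{y,\hat y}-\mathbb{1}\{y=\hat y\}\bigr)(q_yp_y^+-p_yq_y^+)+\Delta\mathrm{eq.odds}(y,\hat y\mid D=0)\Bigl(1-p_D\frac{q_y-q_y^+}{p_y-p_y^+}\Bigr). \]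
   Context: Notation: $p^+=\mathbb{P}(A=1)$, $q^+=\mathbb{P}(A=1\mid D=1)$, $p_y=\mathbb{P}(Y=y)$, $q_y=\mathbb{P}(Y=y\mid D=1)$, $p_y^+=\mathbb{P}(Y=y,A=1)$, $q_y^+=\mathbb{P}(Y=y,A=1\mid D=1)$ (so $q^+=\sum_y q_y^+$). Base-classifier quantities: $\varphi_y^{+}=\mathbb{P}(\hat Y=y\mid D=0,A=1)$, $\varphi_y^-=\mathbb{P}(\hat Y=y\mid D=0,A=0)$, $C^+_{y,\hat y}=\mathbb{P}(\hat Y=\hat y\mid D=0,Y=y,A=1)$, $C^-_{y,\hat y}=\mathbb{P}(\hat Y=\hat y\mid D=0,Y=y,A=0)$. Fairness gaps: $\Delta\mathrm{s.p.}(\hat y)=\mathbb{P}(\hat Y=\hat y\mid A=1)-\mathbb{P}(\hat Y=\hat y\mid A=0)$; $\Delta\mathrm{s.p.}(\hat y\mid D=0)=\mathbb{P}(\hat Y=\hat y\mid A=1,D=0)-\mathbb{P}(\hat Y=\hat y\mid A=0,D=0)=\varphi^+_{\hat y}-\varphi^-_{\hat y}$; $\Delta\mathrm{eq.odds}(y,\hat y)=\mathbb{P}(\hat Y=\hat y\mid A=1,Y=y)-\mathbb{P}(\hat Y=\hat y\mid A=0,Y=y)$; $\Delta\mathrm{eq.odds}(y,\hat y\mid D=0)$ is the same with $D=0$ added to both conditionings, equal to $C^+_{y,\hat y}-C^-_{y,\hat y}$; $\Delta\mathrm{eq.opp.}(y)=\Delta\mathrm{eq.odds}(y,y)$ and $\Delta\mathrm{eq.opp.}(y\mid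 D=0)=\Delta\mathrm{eq.odds}(y,y\mid D=0)$. *)

From mathcomp Require Import all_boot all_order all_algebra.
Set Implicit Arguments. Unset Strict Implicit. Unset Printing Implicit Defensive.
Import Order.TTheory GRing.Theory Num.Theory.
Local Open Scope ring_scope.

Definition is_prob (R : realFieldType) (Omega : finType) (P : Omega -> R) :=
  (forall w, 0 <= P w) /\ \sum_(w : Omega) P w = 1.

Definition Pr (R : realFieldType) (Omega : finType) (P : Omega -> R)
  (E : pred Omega) : R := \sum_(w : Omega | E w) P w.

Definition cPr (R : realFieldType) (Omega : finType) (P : Omega -> R)
  (E F : pred Omega) : R := Pr P (predI E F) / Pr P F.

Section Fair.
Variables (R : realFieldType) (Omega : finType) (P : Omega -> R) (K : nat)
  (Y Yh : Omega -> 'I_K) (A D : Omega -> bool).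

Definition dsp (yh : 'I_K) : R :=
  cPr P (fun w => Yh w == yh) (fun w => A w)
  - cPr P (fun w => Yh w == yh) (fun w => ~~ A w).

Definition dsp0 (yh : 'I_K) : R :=
  cPr P (fun w => Yh w == yh) (fun w => A w && ~~ D w)
  - cPr P (fun w => Yh w == yh) (fun w => ~~ A w && ~~ D w).

Definition deqodds (y yh : 'I_K) : R :=
  cPr P (fun w => Yh w == yh) (fun w => A w && (Y w == y))
  - cPr P (fun w => Yh w == yh) (fun w => ~~ A w && (Y w == y)).

Definition deqodds0 (y yh : 'I_K) : R :=
  cPr P (fun w => Yh w == yh) (fun w => [&& A w, Y w == y & ~~ D w])
  - cPr P (fun w => Yh w == yh) (fun w => [&& ~~ A w, Y w == y & ~~ D w]).

Definition deqopp (y : 'I_K) : R := deqodds y y.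
Definition deqopp0 (y : 'I_K) : R := deqodds0 y y.

Definition pD : R := Pr P (fun w => D w).
Definition pplus : R := Pr P (fun w => A w).
Definition qplus : R := cPr P (fun w => A w) (fun w => D w).
Definition p_ (y : 'I_K) : R := Pr P (fun w => Y w == y).
Definition q_ (y : 'I_K) : R := cPr P (fun w => Y w == y) (fun w => D w).
Definition pplus_ (y : 'I_K) : R := Pr P (fun w => (Y w == y) && A w).
Definition qplus_ (y : 'I_K) : R :=
  cPr P (fun w => (Y w == y) && A w) (fun w => D w).
Definition phiplus (yh : 'I_K) : R :=
  cPr P (fun w => Yh w == yh) (fun w => ~~ D w && A w).
Definition phiminus (yh : 'I_K) : R :=
  cPr P (fun w => Yh w == yh) (fun w => ~~ D w && ~~ A w).
Definition Cplus (y yh : 'I_K) : R :=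
  cPr P (fun w => Yh w == yh) (fun w => [&& ~~ D w, Y w == y & A w]).
Definition Cminus (y yh : 'I_K) : R :=
  cPr P (fun w => Yh w == yh) (fun w => [&& ~~ D w, Y w == y & ~~ A w]).

End Fair.

(* Split every event along D.  On D = 1 the prediction equals the label
   almost surely, so the D = 1 part of P(Yh = yh, G) is p_D times a label
   frequency among D = 1, while the D = 0 part is the base-classifier rate
   P(Yh = yh | D = 0, G) times P(G, D = 0) = P(G) - p_D P(G | D = 1).  Each
   group-conditional rate is thereby a mixture of the two, and subtracting the
   mixtures of the two groups leaves the D = 0 gap, reweighted by the D = 0
   share of the second group, plus a bias term coming from the D = 1 part. *)

From mathcomp Require Import all_boot all_order all_algebra ring.
Import Order.TTheory GRing.Theory Num.Theory.
Set Implicit Arguments. Unset Strict Implicit. Unset Printing Implicit Defensive.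
Local Open Scope ring_scope.

Section ConditionalProbability.
Variables (R : realFieldType) (Omega : finType) (P : Omega -> R).
Implicit Types E F G T D : pred Omega.

Lemma eq_Pr_supp {E F} : (forall w, P w != 0 -> E w = F w) -> Pr P E = Pr P F.
Proof.
move=> EF; rewrite /Pr [LHS]big_mkcond [RHS]big_mkcond; apply: eq_bigr => w _.
by have [->|/EF ->] := eqVneq (P w) 0; rewrite ?if_same.
Qed.

Lemma eq_cPr_supp E E' F F' :
    (forall w, P w != 0 -> F w -> E w = E' w) ->
    (forall w, P w != 0 -> F w = F' w) ->
  cPr P E F = cPr P E' F'.
Proof.
move=> EE' FF'; rewrite /cPr (eq_Pr_supp FF'); congr (_ / _).
apply: eq_Pr_supp => w Pw /=; rewrite -FF' //.
by case/boolP: (F w) => Fw; rewrite ?andbF ?EE'.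
Qed.

Lemma Pr_split E G : Pr P E = Pr P (predI E G) + Pr P (predI E (predC G)).
Proof. by rewrite /Pr (bigID G). Qed.

Lemma cPr_split E F G :
  cPr P E F = cPr P (predI E G) F + cPr P (predI E (predC G)) F.
Proof.
rewrite /cPr -mulrDl (Pr_split _ G); congr ((_ + _) / _);
  by apply: eq_Pr_supp => w _ /=; rewrite andbAC.
Qed.

Lemma Pr_predC E : is_prob P -> Pr P (predC E) = 1 - Pr P E.
Proof. by case=> _ P1; rewrite -P1 (bigID E) /= addrC addrK. Qed.

Lemma cPr_predC E F : Pr P F != 0 -> cPr P (predC E) F = 1 - cPr P E F.
Proof.
move=> F0; rewrite /cPr -[1](divff F0) -mulrBl; congr (_ / _).
have -> : Pr P (predI E F) = Pr P (predI F E).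
  by apply: eq_Pr_supp => w _ /=; rewrite andbC.
by rewrite {1}(Pr_split F E) addrC addKr; apply: eq_Pr_supp => w _ /=; rewrite andbC.
Qed.

Lemma product_rule E F : Pr P F != 0 -> cPr P E F * Pr P F = Pr P (predI E F).
Proof. by move=> F0; rewrite /cPr divfK. Qed.

Lemma cPr_eq1_supp E F : (forall w, 0 <= P w) -> Pr P F != 0 -> cPr P E F = 1 ->
  forall w, P w != 0 -> F w -> E w.
Proof.
move=> P_ge0 F0 EF1 w Pw Fw; apply: contraNT Pw => nEw.
have EF : Pr P (predI E F) = Pr P F by rewrite -product_rule // EF1 mul1r.
have nEF0 : Pr P (predI F (predC E)) = 0.
  apply: (addrI (Pr P (predI F E))); rewrite addr0 -Pr_split -EF.
  by apply: eq_Pr_supp => v _ /=; rewrite andbC.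
by apply/eqP; apply: (psumr_eq0P _ nEF0); rewrite /= ?Fw.
Qed.

(* No hypothesis on [Pr P G] is needed: if it vanishes, both sides are [x / 0 = 0]. *)
Lemma cPr_total T G D : Pr P D != 0 -> Pr P (predI (predC D) G) != 0 ->
  cPr P T G = (Pr P D * cPr P (predI T G) D
               + cPr P T (predI (predC D) G) * (Pr P G - Pr P D * cPr P G D)) / Pr P G.
Proof.
move=> D0 nDG0; rewrite ![Pr P D * _]mulrC !product_rule //.
have -> : Pr P G - Pr P (predI G D) = Pr P (predI (predC D) G).
  rewrite (Pr_split G D) addrAC subrr add0r.
  by apply: eq_Pr_supp => w _ /=; rewrite andbC.
rewrite product_rule // /cPr (Pr_split (predI T G) D); congr ((_ + _) / _).
by apply: eq_Pr_supp => w _ /=; rewrite -andbA [G w && _]andbC.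
Qed.

Lemma cPr_eq_and_eq (T : eqType) (X : Omega -> T) (a b : T) G F :
  cPr P (fun w => (X w == a) && ((X w == b) && G w)) F
  = (b == a)%:R * cPr P (fun w => (X w == b) && G w) F.
Proof.
have [<-|ba] := eqVneq b a; rewrite ?mul1r ?mul0r.
  by apply: eq_cPr_supp => // w _; rewrite andbA andbb.
rewrite /cPr /Pr big_pred0 ?mul0r // => w /=.
by case: eqP => // ->; rewrite eq_sym (negbTE ba).
Qed.

Lemma mixture_gap (pD m1 m2 a1 a2 t1 t2 f1 f2 : R) : m1 != 0 -> m2 != 0 ->
  (pD * t1 + f1 * (m1 - pD * a1)) / m1 - (pD * t2 + f2 * (m2 - pD * a2)) / m2
  = pD / (m1 * m2) * (t1 * m2 - t2 * m1 + f1 * (a2 * m1 - a1 * m2))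
    + (f1 - f2) * (1 - pD * (a2 / m2)).
Proof. by move=> m1_neq0 m2_neq0; field; rewrite m1_neq0 m2_neq0. Qed.

End ConditionalProbability.

Section CoupledClassifier.
Variables (R : realFieldType) (Omega : finType) (P : Omega -> R) (K : nat)
  (Y Yh : Omega -> 'I_K) (A D : Omega -> bool).
Hypothesis P_prob : is_prob P.
Hypothesis Yh_eq_Y : forall w, P w != 0 -> D w -> Yh w = Y w.
Hypothesis pD_neq0 : pD P D != 0.

Lemma cPr_Yh_total (G : pred Omega) yh : Pr P (fun w => ~~ D w && G w) != 0 ->
  cPr P (fun w => Yh w == yh) G
  = (pD P D * cPr P (fun w => (Y w == yh) && G w) (fun w => D w)
     + cPr P (fun w => Yh w == yh) (fun w => ~~ D w && G w)
       * (Pr P G - pD P D * cPr P G (fun w => D w))) / Pr P G.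
Proof.
move=> nDG0; rewrite (cPr_total _ (D := fun w => D w)) //.
by congr ((_ * _ + _) / _); apply: eq_cPr_supp => // w Pw /= /(Yh_eq_Y Pw) ->.
Qed.

Lemma Pr_Y_notA y :
  Pr P (fun w => (Y w == y) && ~~ A w) = p_ P Y y - pplus_ P Y A y.
Proof. by rewrite /p_ [in RHS](Pr_split _ _ (fun w => A w)) addrC addKr. Qed.

Lemma cPr_Y_notA y :
  cPr P (fun w => (Y w == y) && ~~ A w) (fun w => D w)
  = q_ P Y D y - qplus_ P Y A D y.
Proof. by rewrite /q_ [in RHS](cPr_split _ _ _ (fun w => A w)) addrC addKr. Qed.

Lemma cPr_Yh_A yh : Pr P (fun w => ~~ D w && A w) != 0 ->
  cPr P (fun w => Yh w == yh) (fun w => A w)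
  = (pD P D * qplus_ P Y A D yh
     + phiplus P Yh A D yh * (pplus P A - pD P D * qplus P A D)) / pplus P A.
Proof. exact: cPr_Yh_total. Qed.

Lemma cPr_Yh_notA yh : Pr P (fun w => ~~ D w && ~~ A w) != 0 ->
  cPr P (fun w => Yh w == yh) (fun w => ~~ A w)
  = (pD P D * (q_ P Y D yh - qplus_ P Y A D yh)
     + phiminus P Yh A D yh * ((1 - pplus P A) - pD P D * (1 - qplus P A D)))
    / (1 - pplus P A).
Proof.
move=> nDnA0; rewrite cPr_Yh_total // cPr_Y_notA.
by rewrite (Pr_predC (fun w => A w)) // (cPr_predC (fun w => A w)).
Qed.

Lemma cPr_Yh_AY y yh : Pr P (fun w => [&& ~~ D w, Y w == y & A w]) != 0 ->
  cPr P (fun w => Yh w == yh) (fun w => (Y w == y) && A w)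
  = (pD P D * ((y == yh)%:R * qplus_ P Y A D y)
     + Cplus P Y Yh A D y yh * (pplus_ P Y A y - pD P D * qplus_ P Y A D y))
    / pplus_ P Y A y.
Proof. by move=> nDYA0; rewrite cPr_Yh_total // cPr_eq_and_eq. Qed.

Lemma cPr_Yh_notAY y yh : Pr P (fun w => [&& ~~ D w, Y w == y & ~~ A w]) != 0 ->
  cPr P (fun w => Yh w == yh) (fun w => (Y w == y) && ~~ A w)
  = (pD P D * ((y == yh)%:R * (q_ P Y D y - qplus_ P Y A D y))
     + Cminus P Y Yh A D y yh
       * ((p_ P Y y - pplus_ P Y A y) - pD P D * (q_ P Y D y - qplus_ P Y A D y)))
    / (p_ P Y y - pplus_ P Y A y).
Proof.
by move=> nDYnA0; rewrite cPr_Yh_total // cPr_eq_and_eq cPr_Y_notA Pr_Y_notA.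
Qed.

Lemma dsp0E yh : dsp0 P Yh A D yh = phiplus P Yh A D yh - phiminus P Yh A D yh.
Proof. by congr (_ - _); apply: eq_cPr_supp => // w _; rewrite andbC. Qed.

Lemma deqodds0E y yh :
  deqodds0 P Y Yh A D y yh = Cplus P Y Yh A D y yh - Cminus P Y Yh A D y yh.
Proof.
by congr (_ - _); apply: eq_cPr_supp => // w _ /=; case: (A w); case: (D w);
  rewrite ?andbF.
Qed.

Lemma dsp_decomposition yh : pplus P A != 0 -> 1 - pplus P A != 0 ->
    Pr P (fun w => ~~ D w && A w) != 0 -> Pr P (fun w => ~~ D w && ~~ A w) != 0 ->
  dsp P Yh A yh
  = pD P D / (pplus P A * (1 - pplus P A))
      * (phiplus P Yh A D yh * (pplus P A - qplus P A D)
         - (q_ P Y D yh * pplus P A - qplus_ P Y A D yh))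
    + dsp0 P Yh A D yh * (1 - pD P D * ((1 - qplus P A D) / (1 - pplus P A))).
Proof.
move=> pA0 pnA0 nDA0 nDnA0.
rewrite /dsp cPr_Yh_A // cPr_Yh_notA // mixture_gap // dsp0E.
by congr (_ * _ + _); ring.
Qed.

Lemma deqodds_decomposition y yh :
    pplus_ P Y A y != 0 -> p_ P Y y - pplus_ P Y A y != 0 ->
    Pr P (fun w => [&& ~~ D w, Y w == y & A w]) != 0 ->
    Pr P (fun w => [&& ~~ D w, Y w == y & ~~ A w]) != 0 ->
  deqodds P Y Yh A y yh
  = pD P D / (pplus_ P Y A y * (p_ P Y y - pplus_ P Y A y))
      * (Cplus P Y Yh A D y yh - (y == yh)%:R)
      * (q_ P Y D y * pplus_ P Y A y - p_ P Y y * qplus_ P Y A D y)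
    + deqodds0 P Y Yh A D y yh
      * (1 - pD P D * ((q_ P Y D y - qplus_ P Y A D y) / (p_ P Y y - pplus_ P Y A y))).
Proof.
move=> pYA0 pYnA0 nDYA0 nDYnA0.
have cond_andC (B : pred Omega) :
    cPr P (fun w => Yh w == yh) (fun w => B w && (Y w == y))
    = cPr P (fun w => Yh w == yh) (fun w => (Y w == y) && B w).
  by apply: eq_cPr_supp => // w _; rewrite andbC.
rewrite /deqodds !cond_andC cPr_Yh_AY // cPr_Yh_notAY // mixture_gap // deqodds0E.
by congr (_ + _); ring.
Qed.

End CoupledClassifier.

Theorem theorem8 (R : realFieldType) (Omega : finType) (P : Omega -> R)
  (K : nat) (Y Yh : Omega -> 'I_K) (A D : Omega -> bool) :
  (1 <= K)%N ->
  is_prob P ->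
  cPr P (fun w => Yh w == Y w) (fun w => D w) = 1 ->
  0 < pplus P A -> pplus P A < 1 ->
  (* all conditioning events have positive probability *)
  0 < Pr P (fun w => D w) ->
  0 < Pr P (fun w => ~~ D w && A w) ->
  0 < Pr P (fun w => ~~ D w && ~~ A w) ->
  (forall y, 0 < Pr P (fun w => (Y w == y) && A w)) ->
  (forall y, 0 < Pr P (fun w => (Y w == y) && ~~ A w)) ->
  (forall y, 0 < Pr P (fun w => [&& ~~ D w, Y w == y & A w])) ->
  (forall y, 0 < Pr P (fun w => [&& ~~ D w, Y w == y & ~~ A w])) ->
  forall y yh : 'I_K,
    let pD := pD P D in
    let pp := pplus P A in
    let qp := qplus P A D in
    [/\ dsp P Yh A yh =
          pD / (pp * (1 - pp)) *
            (phiplus P Yh A D yh * (pp - qp) - (q_ P Y D yh * pp - qplus_ P Y A D yh))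
          + dsp0 P Yh A D yh * (1 - pD * ((1 - qp) / (1 - pp))),
        deqopp P Y Yh A y =
          pD / (pplus_ P Y A y * (p_ P Y y - pplus_ P Y A y)) *
            (Cplus P Y Yh A D y y - 1) *
            (q_ P Y D y * pplus_ P Y A y - p_ P Y y * qplus_ P Y A D y)
          + deqopp0 P Y Yh A D y *
            (1 - pD * ((q_ P Y D y - qplus_ P Y A D y) / (p_ P Y y - pplus_ P Y A y)))
      & deqodds P Y Yh A y yh =
          pD / (pplus_ P Y A y * (p_ P Y y - pplus_ P Y A y)) *
            (Cplus P Y Yh A D y yh - (y == yh)%:R) *
            (q_ P Y D y * pplus_ P Y A y - p_ P Y y * qplus_ P Y A D y)
          + deqodds0 P Y Yh A D y yh *
            (1 - pD * ((q_ P Y D y - qplus_ P Y A D y) / (p_ P Y y - pplus_ P Y A y)))].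
Proof.
move=> _ P_prob Yh_Y pA_gt0 pA_lt1 pD_gt0 nDA_gt0 nDnA_gt0 YA_gt0 YnA_gt0
  nDYA_gt0 nDYnA_gt0 y yh.
have pD_neq0 := lt0r_neq0 pD_gt0.
have Yh_eq_Y w : P w != 0 -> D w -> Yh w = Y w.
  by move=> Pw Dw; apply/eqP; apply: (cPr_eq1_supp _ pD_neq0 Yh_Y Pw Dw); case: P_prob.
have pnA_neq0 : 1 - pplus P A != 0 by rewrite subr_eq0 eq_sym lt_eqF.
have pYnA_neq0 : p_ P Y y - pplus_ P Y A y != 0 by rewrite -Pr_Y_notA lt0r_neq0.
have eqodds z := deqodds_decomposition Yh_eq_Y pD_neq0 z (lt0r_neq0 (YA_gt0 y))
  pYnA_neq0 (lt0r_neq0 (nDYA_gt0 y)) (lt0r_neq0 (nDYnA_gt0 y)).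
split.
- by apply: dsp_decomposition; rewrite // lt0r_neq0.
- by rewrite /deqopp /deqopp0 eqodds eqxx.
- exact: eqodds.
Qed.
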